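(* Let $I$ be a nonempty finite set, $C=(c_{ij})_{i,j\in I}$ a generalized Cartan matrix, $\mathcal C=\mathcal C(I,A,(\rho_i)_{i\in I},(C^a)_{a\in A})$ a connected standard Cartan scheme with $C^a=C$ for all $a\in A$, and $\mathcal R=\mathcal R(\mathcal C,(R^a)_{a\in A})$ a root system of type $\mathcal C$. Then: (1) for every $a\in A$ the set of all $f\in\mathrm{Aut}(\mathbb Z^I)$ such that $f$ underlies a morphism in $\mathrm{Hom}(a,b)$ for some $b\in A$ is a subgroup of $\mathrm{Aut}(\mathbb Z^I)$ isomorphic to the Weyl group $W(C)$; (2) $\mathcal R$ is finite if and only if $C$ is of finite type; (3) if $\mathcal R$ is finite, then for all $a\in A$, $R^a$ is the set of roots corresponding to $W(C)$; in particular it is independent of $a$.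
   Context: $\{\alpha_i\mid i\in I\}$ is the standard basis of $\mathbb Z^I$; $\mathbb N_0=\{0,1,2,\dots\}$. A generalized Cartan matrix is $C=(c_{ij})_{i,j\in I}\in\mathbb Z^{I\times I}$ with $c_{ii}=2$, $c_{jk}\le0$ for $j\ne k$, and $c_{ij}=0\Rightarrow c_{ji}=0$. A Cartan scheme $\mathcal C=\mathcal C(I,A,(\rho_i)_{i\in I},(C^a)_{a\in A})$ consists of a nonempty set $A$, maps $\rho_i:A\to A$ and generalized Cartan matrices $C^a=(c^a_{jk})_{j,k\in I}$ such that (C1) $\rho_i^2=\mathrm{id}$ and (C2) $c^a_{ij}=c^{\rho_i(a)}_{ij}$ for all $a\in A$, $i,j\in I$. It is connected if the group generated by the $\rho_i$ acts transitively on $A$, and standard if $C^a=C^b$ for all $a,b\in A$. For $i\in I$, $a\in A$ let $\sigma_i^a\in\mathrm{Aut}(\mathbb Z^I)$, $\sigma_i^a(\alpha_j)=\alpha_j-c^a_{ij}\alpha_i$. The Weyl groupoid has object set $A$; $\mathrm{Hom}(a,b)$ consists of the triples $(b,f,a)$ with $f=\sigma_{i_n}^{a_{n-1}}\cdots\sigma_{i_1}^{a_0}$, where $n\ge0$, $i_1,\dots,i_n\in I$, $a_0=a$, $a_k=\rho_{i_k}(a_{k-1})$, $a_n=b$; composition is multiplication in $\mathrm{Aut}(\mathbb Z^I)$. A root system of type $\mathcal C$ is a family $\mathcal R=\mathcal R(\mathcal C,(R^a)_{a\in A})$ of subsets $R^a\subset\mathbb Z^I$ such that, writing $R^a_+=R^a\cap\mathbb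 N_0^I$ and $m^a_{i,j}=|R^a\cap(\mathbb N_0\alpha_i+\mathbb N_0\alpha_j)|$, for all $a\in A$, $i,j\in I$: (R1) $R^a=R^a_+\cup(-R^a_+)$; (R2) $R^a\cap\mathbb Z\alpha_i=\{\alpha_i,-\alpha_i\}$; (R3) $\sigma_i^a(R^a)=R^{\rho_i(a)}$; (R4) if $i\neq j$ and $m^a_{i,j}$ is finite then $(\rho_i\rho_j)^{m^a_{i,j}}(a)=a$. It is finite if every $R^a$ is finite. $W(C)$ is the subgroup of $\mathrm{Aut}(\mathbb Z^I)$ generated by $s_i(\alpha_j)=\alpha_j-c_{ij}\alpha_i$, $i\in I$, and its set of roots is $\{w(\alpha_i)\mid w\in W(C), i\in I\}$. *)

(* The index set I is 'I_n (with 0 < n); Z^I is the type of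
   integer column vectors 'cV[int]_n; endomorphisms of Z^I are matrices
   'M[int]_n acting on the left; Aut(Z^I) = unit matrices (det = +-1). *)
From HB Require Import structures.
From mathcomp Require Import all_boot all_order all_algebra.
From Stdlib Require Import Reals.
From mathcomp Require Import Rstruct.
Set Implicit Arguments. Unset Strict Implicit. Unset Printing Implicit Defensive.
Import Order.TTheory GRing.Theory Num.Theory.
Local Open Scope ring_scope.

Section Defs.
Variable n : nat.

Definition alpha (i : 'I_n) : 'cV[int]_n := delta_mx i 0.

Definition nonneg_vec (v : 'cV[int]_n) : Prop := forall k, 0 <= v k 0.

Definition is_GCM (C : 'M[int]_n) : Prop :=
  (forall i, C i i = 2) /\
  (forall j k, j != k -> C j k <= 0) /\
  (forall i j, C i j = 0 -> C j i = 0).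

(* sigma_i^a for the Cartan matrix Ca = C^a :
   sigma(alpha_j) = alpha_j - c_ij alpha_i, i.e. column j is alpha_j - c_ij alpha_i *)
Definition sigma (Ca : 'M[int]_n) (i : 'I_n) : 'M[int]_n :=
  \matrix_(k, j) ((k == j)%:Z - (k == i)%:Z * Ca i j).

Section Scheme.
Variables (A : Type) (rho : 'I_n -> A -> A) (Cs : A -> 'M[int]_n).

Definition is_cartan_scheme : Prop :=
  (forall a, is_GCM (Cs a)) /\
  (forall i a, rho i (rho i a) = a) /\
  (forall a i j, Cs a i j = Cs (rho i a) i j).

Definition wend (a : A) (w : seq 'I_n) : A := foldl (fun x i => rho i x) a w.

Fixpoint wmap (a : A) (w : seq 'I_n) : 'M[int]_n :=
  match w with
  | [::] => 1%:M
  | i :: w' => wmap (rho i a) w' *m sigma (Cs a) i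
  end.

Definition is_hom (a b : A) (f : 'M[int]_n) : Prop :=
  exists w : seq 'I_n, wend a w = b /\ f = wmap a w.

Definition connected : Prop := forall a b : A, exists w, wend a w = b.

Definition standard : Prop := forall a b, Cs a = Cs b.

Definition finite_set (P : 'cV[int]_n -> Prop) : Prop :=
  exists s : seq 'cV[int]_n, forall v, P v <-> v \in s.

Definition card_is (P : 'cV[int]_n -> Prop) (m : nat) : Prop :=
  exists s : seq 'cV[int]_n, [/\ uniq s, size s = m & forall v, P v <-> v \in s].

Definition in_span2 (i j : 'I_n) (v : 'cV[int]_n) : Prop :=
  exists k l : nat, v = k%:Z *: alpha i + l%:Z *: alpha j.

Definition is_root_system (R : A -> 'cV[int]_n -> Prop) : Prop :=
  [/\
      (forall a v, R a v <-> (R a v /\ nonneg_vec v) \/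
                             (exists u, R a u /\ nonneg_vec u /\ v = - u)),
      (forall a i v, (R a v /\ exists k : int, v = k *: alpha i) <->
                     (v = alpha i \/ v = - alpha i)),
      (forall a i v, R (rho i a) v <-> exists u, R a u /\ v = sigma (Cs a) i *m u) &
      (forall a i j (m : nat), i != j ->
         card_is (fun v => R a v /\ in_span2 i j v) m ->
         iter m (fun x => rho i (rho j x)) a = a)].

End Scheme.

(* W(C): the subgroup of Aut(Z^I) generated by the s_i: finite products of
   generators and their inverses *)
Definition in_weyl (C : 'M[int]_n) (M : 'M[int]_n) : Prop :=
  exists w : seq ('I_n * bool),
    M = foldr (fun p N => (if p.2 then sigma C p.1 else invmx (sigma C p.1)) *m N)
              1%:M w.

Definition is_weyl_root (C : 'M[int]_n) (v : 'cV[int]_n) : Prop :=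
  exists M i, in_weyl C M /\ v = M *m alpha i.

Definition is_aut_subgroup (H : 'M[int]_n -> Prop) : Prop :=
  [/\ forall M, H M -> M \in unitmx,
      H 1%:M,
      forall M N, H M -> H N -> H (M *m N) &
      forall M, H M -> H (invmx M)].

Definition group_iso (H K : 'M[int]_n -> Prop) : Prop :=
  exists phi : 'M[int]_n -> 'M[int]_n,
    [/\ forall x y, H x -> H y -> phi (x *m y) = phi x *m phi y,
        forall x, H x -> K (phi x),
        forall x y, H x -> H y -> phi x = phi y -> x = y &
        forall y, K y -> exists x, H x /\ phi x = y].

(* Kac's notion of finite type.  J is an indecomposable component of C. *)
Definition is_component (C : 'M[int]_n) (J : {set 'I_n}) : Prop :=
  [/\ J != set0,
      (forall i j, i \in J -> j \notin J -> C i j = 0) &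
      (forall K : {set 'I_n}, K \subset J -> K != set0 -> K != J ->
         exists i j, [/\ i \in K, j \in J, j \notin K & C i j != 0])].

(* condition (Fin) of Kac, Thm 4.3, for the principal submatrix C_J, real vectors *)
Definition fin_cond (C : 'M[int]_n) (J : {set 'I_n}) : Prop :=
  [/\ \det (\matrix_(k < #|J|, l < #|J|) ((C (enum_val k) (enum_val l))%:~R : R)) != 0,
      (exists u : 'I_n -> R, (forall j, j \in J -> 0 < u j) /\
         (forall i, i \in J -> 0 < \sum_(j in J) (C i j)%:~R * u j)) &
      (forall v : 'I_n -> R,
         (forall i, i \in J -> 0 <= \sum_(j in J) (C i j)%:~R * v j) ->
         (forall j, j \in J -> 0 < v j) \/ (forall j, j \in J -> v j = 0))].

Definition finite_type (C : 'M[int]_n) : Prop :=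
  forall J, is_component C J -> fin_cond C J.

End Defs.

From HB Require Import structures.
From mathcomp Require Import all_boot all_order all_algebra.
From mathcomp Require Import boolp Rstruct.
From mathcomp Require Import ring lra zify.
Set Implicit Arguments. Unset Strict Implicit. Unset Printing Implicit Defensive.
Import Order.TTheory GRing.Theory Num.Theory.
Local Open Scope ring_scope.

(* The morphisms out of an object of the Weyl groupoid are the products of the
   reflections s_i, so they form W(C), and every real root of C lies in every R^a.
   When C is of finite type, a positive root b that is not simple has positive
   pairing with some coroot (Vinberg's dichotomy applied to -b), so s_i lowers
   its height inside the root system; hence R^a consists of real roots.  In that
   case C is symmetrizable and W(C) preserves a quadratic form that is positive
   definite on the lattice, which bounds the real roots.  Conversely, if some R^a
   is finite, the sum delta of the positive real roots satisfies
   <alpha_i^v, delta> = 2 for all i, because s_i permutes the positive real roots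
   other than alpha_i; a positive vector with positive image under C forces C to
   be of finite type. *)

Section FiniteSets.
Variable n : nat.
Implicit Types P Q : 'cV[int]_n -> Prop.

Lemma finite_set_sub P Q : finite_set P -> (forall v, Q v -> P v) -> finite_set Q.
Proof.
case=> s sP QP; exists [seq v <- s | `[< Q v >]] => v; rewrite mem_filter.
by split=> [Qv|/andP [/asboolP //]]; rewrite asboolT //= -sP; apply: QP.
Qed.

Lemma finite_set_bounded (N : nat) P :
  (forall v, P v -> forall k, `|v k 0| < N%:Z) -> finite_set P.
Proof.
move=> P_bnd; pose shift (f : {ffun 'I_n -> 'I_(N + N).+1}) : 'cV[int]_n :=
  \col_k ((f k : nat)%:Z - N%:Z).
pose box := map shift (enum {ffun 'I_n -> 'I_(N + N).+1}).
apply: (finite_set_sub (P := fun v => v \in box)); first by exists box.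
move=> v Pv; apply/mapP; exists [ffun k => inord (absz (v k 0 + N%:Z))].
  by rewrite mem_enum.
apply/matrixP => k y; rewrite (ord1 y) !mxE ffunE inordK;
  by have := P_bnd v Pv k; move: (v k 0) => x; lia.
Qed.

End FiniteSets.

Section Reflections.
Variables (n : nat) (C : 'M[int]_n).
Hypothesis hC : is_GCM C.

Lemma alphaE (i k : 'I_n) : alpha i k 0 = (k == i)%:R.
Proof. by rewrite /alpha mxE eqxx andbT. Qed.

Definition pairing i (v : 'cV[int]_n) : int := \sum_j C i j * v j 0.

Lemma pairing_alpha i : pairing i (alpha i) = 2.
Proof.
rewrite /pairing (bigD1 i) //= big1 ?addr0; last first.
  by move=> j /negbTE ji; rewrite alphaE ji mulr0.
by rewrite alphaE eqxx mulr1 hC.1.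
Qed.

Lemma pairingD i u v : pairing i (u + v) = pairing i u + pairing i v.
Proof. by rewrite /pairing -big_split; apply: eq_bigr => j _; rewrite mxE mulrDr. Qed.

Lemma sigmaE i (v : 'cV[int]_n) k :
  (sigma C i *m v) k 0 = v k 0 - pairing i v * (k == i)%:R.
Proof.
rewrite !mxE; under eq_bigr do rewrite mxE mulrBl.
rewrite sumrB /pairing mulr_suml; congr (_ - _); last first.
  by apply: eq_bigr => j _; case: (k == i); rewrite ?mul1r ?mulr1 ?mul0r ?mulr0.
rewrite (bigD1 k) //= eqxx mul1r big1 ?addr0 // => j /negbTE kj.
by rewrite eq_sym kj mul0r.
Qed.

Lemma sigma_mulmx i v : sigma C i *m v = v - pairing i v *: alpha i.
Proof.
apply/matrixP => k y; rewrite (ord1 y) sigmaE !mxE eqxx andbT.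
by case: (k == i); rewrite ?mulr1 ?mulr0.
Qed.

Lemma sigma_alpha i : sigma C i *m alpha i = - alpha i.
Proof. by rewrite sigma_mulmx pairing_alpha scaler_nat mulr2n opprD addNKr. Qed.

Lemma sigma_mulmxK i (v : 'cV[int]_n) : sigma C i *m (sigma C i *m v) = v.
Proof.
rewrite [sigma C i *m v]sigma_mulmx mulmxBr -scalemxAr sigma_alpha.
by rewrite sigma_mulmx scalerN opprK subrK.
Qed.

Lemma sigmaK i : sigma C i *m sigma C i = 1%:M.
Proof.
apply/matrixP => k j; have colj (M : 'M[int]_n) : M k j = (M *m alpha j) k 0.
  by rewrite -colE mxE.
by rewrite colj [RHS]colj -mulmxA sigma_mulmxK mul1mx.
Qed.

Lemma sigma_unit i : sigma C i \in unitmx.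
Proof. by case: (mulmx1_unit (sigmaK i)). Qed.

Lemma invmx_sigma i : invmx (sigma C i) = sigma C i.
Proof. by rewrite -[LHS]mulmx1 -(sigmaK i) mulmxA mulVmx ?mul1mx ?sigma_unit. Qed.

Definition sigma_word (w : seq 'I_n) : 'M[int]_n :=
  foldr (fun i M => M *m sigma C i) 1%:M w.

Lemma sigma_word_cat w1 w2 :
  sigma_word (w1 ++ w2) = sigma_word w2 *m sigma_word w1.
Proof. by elim: w1 => [|i w1 IH] /=; rewrite ?mulmx1 // IH mulmxA. Qed.

Lemma sigma_word_rcons w i : sigma_word (rcons w i) = sigma C i *m sigma_word w.
Proof. by rewrite -cats1 sigma_word_cat /= mul1mx. Qed.

Lemma sigma_wordK w : sigma_word w *m sigma_word (rev w) = 1%:M.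
Proof.
elim: w => [|i w IH] /=; first by rewrite mulmx1.
by rewrite rev_cons sigma_word_rcons -mulmxA (mulmxA (sigma C i)) sigmaK mul1mx.
Qed.

Lemma sigma_word_unit w : sigma_word w \in unitmx.
Proof. by case: (mulmx1_unit (sigma_wordK w)). Qed.

Lemma invmx_sigma_word w : invmx (sigma_word w) = sigma_word (rev w).
Proof.
by rewrite -[LHS]mulmx1 -(sigma_wordK w) mulmxA mulVmx ?mul1mx ?sigma_word_unit.
Qed.

Lemma in_weylP M : in_weyl C M <-> exists w, M = sigma_word w.
Proof.
split=> [[ws ->]|[w ->]].
  exists (rev (map fst ws)); elim: ws => [|[i b] ws IH] //=.
  by rewrite rev_cons sigma_word_rcons -IH; case: b; rewrite //= invmx_sigma.
exists (rev (map (pair^~ true) w)); elim: w => [|i w IH] //=.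
rewrite rev_cons -cats1 foldr_cat /= mulmx1 IH.
by elim: (rev _) (sigma C i) => [|p s IHs] X /=; rewrite ?mul1mx // -mulmxA IHs.
Qed.

Definition word_root (v : 'cV[int]_n) : Prop :=
  exists w j, v = sigma_word w *m alpha j.

Lemma is_weyl_rootP v : is_weyl_root C v <-> word_root v.
Proof.
split=> [[M [j [/in_weylP [w ->] ->]]]|[w [j ->]]]; first by exists w, j.
by exists (sigma_word w), j; split=> //; apply/in_weylP; exists w.
Qed.

Lemma word_root_alpha j : word_root (alpha j).
Proof. by exists [::], j; rewrite mul1mx. Qed.

Lemma word_root_sigma i v : word_root v -> word_root (sigma C i *m v).
Proof. by case=> w [j ->]; exists (rcons w i), j; rewrite sigma_word_rcons mulmxA. Qed.

Lemma word_root_opp v : word_root v -> word_root (- v).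
Proof. by case=> w [j ->]; exists (j :: w), j; rewrite /= -mulmxA sigma_alpha mulmxN. Qed.

Definition ht (v : 'cV[int]_n) : int := \sum_k v k 0.

Lemma ht_sigma i v : ht (sigma C i *m v) = ht v - pairing i v.
Proof.
rewrite /ht sigma_mulmx; under eq_bigr do rewrite !mxE eqxx andbT.
rewrite sumrB; congr (_ - _).
rewrite (bigD1 i) //= eqxx mulr1 big1 ?addr0 // => k /negbTE ->.
by rewrite mulr0.
Qed.

Lemma ht_ge0 v : nonneg_vec v -> 0 <= ht v.
Proof. by move=> v_ge0; apply: sumr_ge0. Qed.

Lemma nonneg_alpha (i : 'I_n) : nonneg_vec (alpha i).
Proof. by move=> k; rewrite alphaE; case: (k == i). Qed.

Lemma nonneg_opp_alpha (i : 'I_n) : ~ nonneg_vec (- alpha i).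
Proof. by move=> /(_ i); rewrite mxE alphaE eqxx. Qed.

Lemma sigma_nonneg i v : nonneg_vec v -> v != alpha i ->
  nonneg_vec (sigma C i *m v) \/ nonneg_vec (- (sigma C i *m v)) ->
  (forall k : int, v = k *: alpha i -> v = alpha i \/ v = - alpha i) ->
  nonneg_vec (sigma C i *m v).
Proof.
move=> v_ge0 v_neq [//|sv_le0] v_mult.
have [j /andP [ji vj]|v_on_i] := pickP (fun j => (j != i) && (v j 0 != 0)).
  have := sv_le0 j; rewrite mxE sigmaE (negbTE ji) mulr0 subr0.
  by have := v_ge0 j; move: vj; lia.
have vE : v = v i 0 *: alpha i.
  apply/matrixP => k y; rewrite (ord1 y) !mxE eqxx andbT.
  have [->|ki] := eqVneq k i; first by rewrite mulr1.
  by move/negbT: (v_on_i k); rewrite ki negbK => /eqP ->; rewrite mulr0.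
case: (v_mult _ vE) => vi; first by rewrite vi eqxx in v_neq.
by case: (nonneg_opp_alpha (i := i)); rewrite -vi.
Qed.

End Reflections.

Section CartanReal.
Variables (n : nat) (C : 'M[int]_n).
Hypothesis hC : is_GCM C.
Variable F : realFieldType.

Definition cartanR i j : F := (C i j)%:~R.

Lemma cartanR_diag i : cartanR i i = 2.
Proof. by rewrite /cartanR hC.1. Qed.

Lemma cartanR_le0 i j : i != j -> cartanR i j <= 0.
Proof. by move=> ij; rewrite /cartanR lerz0 hC.2.1. Qed.

Lemma cartanR_eq0 i j : (cartanR i j == 0) = (C i j == 0).
Proof. by rewrite /cartanR intr_eq0. Qed.

Definition cmul (S : {set 'I_n}) (u : 'I_n -> F) i := \sum_(j in S) cartanR i j * u j.

Lemma cmul_comb S (u v : 'I_n -> F) a b i :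
  cmul S (fun j => a * u j + b * v j) i = a * cmul S u i + b * cmul S v i.
Proof. by rewrite /cmul !mulr_sumr -big_split /=; apply: eq_bigr => j _; ring. Qed.

Lemma cmul_le0 (S : {set 'I_n}) (w : 'I_n -> F) k : k \in S -> w k = 0 ->
  {in S, forall j, 0 <= w j} -> cmul S w k <= 0.
Proof.
move=> kS wk w_ge0; apply: sumr_le0 => j jS.
have [<-|kj] := eqVneq k j; first by rewrite wk mulr0.
by rewrite mulr_le0_ge0 ?cartanR_le0 ?w_ge0.
Qed.

Lemma min_ratio (S : {set 'I_n}) (u v : 'I_n -> F) :
  S != set0 -> {in S, forall j, 0 < u j} ->
  exists2 k, k \in S & {in S, forall j, v k / u k * u j <= v j}.
Proof.
case/set0Pn => k0 k0S u_gt0.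
case: (arg_minP (fun j => v j / u j) k0S) => k kS kmin; exists k => // j jS.
by rewrite -ler_pdivlMr ?u_gt0 // kmin.
Qed.

Lemma cmul_pos_excl (S : {set 'I_n}) u v : S != set0 ->
  {in S, forall j, 0 < u j} -> {in S, forall i, 0 < cmul S u i} ->
  {in S, forall j, 0 < v j} -> ~ {in S, forall i, cmul S v i <= 0}.
Proof.
move=> S0 u_gt0 Cu_gt0 v_gt0 Cv_le0.
have [k kS kmin] := min_ratio u S0 v_gt0.
have m_gt0 : 0 < u k / v k by rewrite divr_gt0 ?u_gt0 ?v_gt0.
have := @cmul_le0 S (fun j => 1 * u j + (- (u k / v k)) * v j) k kS.
rewrite cmul_comb mul1r mulNr divfK ?subrr ?gt_eqF ?v_gt0 //.
have {}kmin : {in S, forall j, 0 <= 1 * u j + (- (u k / v k)) * v j}.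
  by move=> j jS; rewrite mul1r mulNr subr_ge0 kmin.
move/(_ erefl kmin); have := Cu_gt0 k kS; have := Cv_le0 k kS.
by move: (cmul S u k) (cmul S v k) (u k / v k) m_gt0 => a b m; nra.
Qed.

Lemma component_vanish J (w : 'I_n -> F) : is_component C J ->
  {in J, forall j, 0 <= w j} -> {in J, forall i, 0 <= cmul J w i} ->
  forall k, k \in J -> w k = 0 -> {in J, forall j, w j = 0}.
Proof.
move=> [_ _ indec] w_ge0 Cw_ge0 k kJ wk.
set Z := [set j in J | w j == 0].
have ZJ : Z \subset J by apply/subsetP => x; rewrite inE => /andP [].
have [EZ|NZ] := eqVneq Z J; first by move=> j; rewrite -EZ inE => /andP [_ /eqP].
have Z0 : Z != set0 by apply/set0Pn; exists k; rewrite inE kJ wk eqxx.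
have [i [j [iZ jJ jZ Cij]]] := indec Z ZJ Z0 NZ.
move: iZ; rewrite inE => /andP [iJ /eqP wi].
have terms_ge0 : {in J, forall x, 0 <= - (cartanR i x * w x)}.
  move=> x xJ; rewrite oppr_ge0; have [<-|ix] := eqVneq i x; first by rewrite wi mulr0.
  by rewrite mulr_le0_ge0 ?cartanR_le0 ?w_ge0.
have : \sum_(x in J) - (cartanR i x * w x) = 0.
  by rewrite sumrN; apply/eqP; rewrite oppr_eq0 eq_le cmul_le0 ?Cw_ge0.
move/(psumr_eq0P terms_ge0)/(_ j jJ)/eqP; rewrite oppr_eq0 mulf_eq0 cartanR_eq0.
by rewrite (negbTE Cij) /= => /eqP wj; rewrite inE jJ wj eqxx in jZ.
Qed.

Lemma fin_cond_dichotomy J (u v : 'I_n -> F) : is_component C J ->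
  {in J, forall j, 0 < u j} -> {in J, forall i, 0 < cmul J u i} ->
  {in J, forall i, 0 <= cmul J v i} ->
  {in J, forall j, 0 < v j} \/ {in J, forall j, v j = 0}.
Proof.
move=> hJ u_gt0 Cu_gt0 Cv_ge0; have J0 : J != set0 by case: hJ.
have [k kJ kmin] := min_ratio v J0 u_gt0; set m := v k / u k in kmin.
have [m_gt0|m_le0] := ltP 0 m.
  by left=> j jJ; apply: lt_le_trans (kmin j jJ); rewrite mulr_gt0 ?u_gt0.
right; pose w j := 1 * v j + (- m) * u j.
have w_ge0 : {in J, forall j, 0 <= w j}.
  by move=> j jJ; rewrite /w mul1r mulNr subr_ge0 kmin.
have wk : w k = 0 by rewrite /w mul1r mulNr divfK ?subrr ?gt_eqF ?u_gt0.
have Cw_ge0 : {in J, forall i, 0 <= cmul J w i}.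
  move=> i iJ; rewrite cmul_comb; have := Cv_ge0 i iJ; have := Cu_gt0 i iJ.
  by move: (cmul J u i) (cmul J v i) m_le0 => a b; nra.
have vE : {in J, forall j, v j = m * u j}.
  move=> j jJ; apply/eqP; rewrite -subr_eq0 -mulNr -[v j]mul1r.
  by apply/eqP; apply: (component_vanish hJ w_ge0 Cw_ge0 kJ wk).
have m0 : m = 0.
  have : cmul J v k = m * cmul J u k.
    by rewrite /cmul mulr_sumr; apply: eq_big => // j jJ; rewrite vE // mulrCA.
  have := Cv_ge0 k kJ; have := Cu_gt0 k kJ.
  by move: (cmul J u k) (cmul J v k) m_le0 => a b; nra.
by move=> j jJ; rewrite vE // m0 mul0r.
Qed.

Lemma fin_cond_det J : is_component C J ->
  (forall v : 'I_n -> F, {in J, forall i, 0 <= cmul J v i} ->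
     {in J, forall j, 0 < v j} \/ {in J, forall j, v j = 0}) ->
  \det (\matrix_(k < #|J|, l < #|J|) ((C (enum_val k) (enum_val l))%:~R : F)) != 0.
Proof.
move=> hJ dichotomy; have /set0Pn [x0 x0J] : J != set0 by case: hJ.
rewrite -det_tr; apply/negP => /det0P [v v_neq0 vM].
pose w x := if x \in J then v 0 (enum_rank_in x0J x) else 0.
have wE (l : 'I_#|J|) : w (enum_val l) = v 0 l by rewrite /w enum_valP enum_valK_in.
have Cw0 : {in J, forall i, cmul J w i = 0}.
  move=> i iJ; rewrite /cmul (big_enum_val (fun x => cartanR i x * w x)) /=.
  have := congr1 (fun B : 'M[F]_(1, #|J|) => B 0 (enum_rank_in x0J i)) vM.
  rewrite !mxE => vM_i; apply: etrans vM_i; apply: eq_bigr => l _.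
  by rewrite wE !mxE enum_rankK_in // mulrC.
have Cw_ge0 : {in J, forall i, 0 <= cmul J w i} by move=> i /Cw0 ->.
have Cnw_ge0 : {in J, forall i, 0 <= cmul J (fun x => - w x) i}.
  move=> i iJ; rewrite (_ : cmul J _ i = - 1 * cmul J w i + 0 * cmul J w i).
    by rewrite Cw0 // !mulr0 addr0.
  by rewrite -cmul_comb /cmul; apply: eq_bigr => j _; ring.
have [w_gt0|w0] := dichotomy w Cw_ge0.
  have := w_gt0 x0 x0J; case: (dichotomy _ Cnw_ge0) => /(_ x0 x0J) /=; lra.
move/negP: v_neq0; apply; apply/eqP/rowP => l; rewrite mxE -wE.
exact: w0 (enum_valP l).
Qed.

Lemma cmul_component J v i : is_component C J -> i \in J ->
  cmul J v i = \sum_j cartanR i j * v j.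
Proof.
move=> [_ J_closed _] iJ; rewrite [RHS](bigID (mem J)) /= [X in _ + X]big1 ?addr0 //.
by move=> j jJ; rewrite /cartanR J_closed // mulr0z mul0r.
Qed.

Definition vecR (v : 'cV[int]_n) k : F := (v k 0)%:~R.

Lemma pairingR i v : (pairing C i v)%:~R = \sum_j cartanR i j * vecR v j.
Proof. by rewrite rmorph_sum; apply: eq_bigr => j _; rewrite rmorphM. Qed.

Lemma vecR_sigma i v k :
  vecR (sigma C i *m v) k = vecR v k - (\sum_j cartanR i j * vecR v j) * (k == i)%:R.
Proof. by rewrite /vecR sigmaE intrB intrM pairingR; case: (k == i). Qed.

End CartanReal.

Section Components.
Variables (n : nat) (C : 'M[int]_n).
Hypothesis hC : is_GCM C.

Definition cartan_adj : rel 'I_n := fun i j => C i j != 0.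

Lemma cartan_adj_sym : symmetric cartan_adj.
Proof.
by move=> i j; apply/idP/idP; apply: contra => /eqP /hC.2.2 ->.
Qed.

Definition comp k : {set 'I_n} := [set j | connect cartan_adj k j].

Lemma comp_self k : k \in comp k.
Proof. by rewrite inE connect0. Qed.

Lemma comp_adj k i j : i \in comp k -> C i j != 0 -> j \in comp k.
Proof. by rewrite !inE => ki cij; apply: connect_trans ki (connect1 _). Qed.

Lemma comp_eq i j : j \in comp i -> comp j = comp i.
Proof.
have csym := sym_connect_sym cartan_adj_sym.
rewrite inE => ij; apply/setP => x; rewrite !inE.
by apply/idP/idP; apply: connect_trans; rewrite // csym.
Qed.

Lemma comp_is_component k : is_component C (comp k).
Proof.
split=> [|i j ik|K KJ K0 KN].
- by apply/set0Pn; exists k; apply: comp_self.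
- by apply: contraNeq => cij; apply: comp_adj ik cij.
case: (boolP [exists i, exists j, [&& i \in K, j \in comp k, j \notin K & C i j != 0]]).
  by case/existsP => i /existsP [j /and4P [iK jJ jK cij]]; exists i, j.
move/negP => no_edge; exfalso.
have stays (x y : 'I_n) : cartan_adj x y -> x \in K -> y \in K.
  move=> xy xK; apply/negPn/negP => yK; apply: no_edge.
  apply/existsP; exists x; apply/existsP; exists y.
  by rewrite xK yK (comp_adj (subsetP KJ x xK) xy).
have clK : closed cartan_adj K.
  by move=> x y xy; apply/idP/idP; apply: stays; rewrite // cartan_adj_sym.
have /set0Pn [x0 x0K] := K0.
have /subsetPn [y0 y0J y0K] : ~~ (comp k \subset K).
  by apply: contra KN => JK; rewrite eqEsubset KJ JK.
have : y0 \in comp x0 by rewrite (comp_eq (subsetP KJ x0 x0K)).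
by rewrite inE => /(closed_connect clK); rewrite x0K (negbTE y0K).
Qed.

End Components.

Section Symmetrization.
Variables (n : nat) (C : 'M[int]_n).
Hypothesis hC : is_GCM C.
Variable F : realFieldType.
Local Notation cartanR := (@cartanR n C F).
Local Notation cmul := (@cmul n C F).

Lemma cartanR_le_m1 i j : i != j -> C i j != 0 -> cartanR i j <= -1.
Proof.
move=> ij cij; have : C i j <= -1 by have := hC.2.1 i j ij; move: cij; lia.
by rewrite /cartanR -(ler_int F).
Qed.

Lemma cmulD1 (S : {set 'I_n}) u i l : l \in S ->
  cmul S u i = cartanR i l * u l + cmul (S :\ l) u i.
Proof.
move=> lS; rewrite /cmul/= (bigD1 l) //=; congr (_ + _).
by apply: eq_bigl => j; rewrite !inE andbC.
Qed.

Lemma exists_leaf (S : {set 'I_n}) (u : 'I_n -> F) : S != set0 ->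
  {in S, forall j, 0 < u j} -> {in S, forall i, 0 < cmul S u i} ->
  exists2 l, l \in S & {in S &, forall j1 j2, j1 != l -> j2 != l ->
     C l j1 != 0 -> C l j2 != 0 -> j1 = j2}.
Proof.
move=> S0 u_gt0 Cu_gt0.
case: (boolP [exists l in S, forall j1 in S, forall j2 in S,
   [==> j1 != l, j2 != l, C l j1 != 0, C l j2 != 0 => j1 == j2]]).
  case/exists_inP => l lS /forall_inP leaf; exists l => // j1 j2 j1S j2S n1 n2 c1 c2.
  by have /forall_inP/(_ j2 j2S) := leaf j1 j1S; rewrite n1 n2 c1 c2 => /eqP.
move/exists_inPn => no_leaf; exfalso.
(* Every vertex of S has two neighbours in S, so C_S maps 1 to a nonpositive vector. *)
apply: (cmul_pos_excl hC S0 u_gt0 Cu_gt0 (v := fun _ => 1)) => [j _|l lS].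
  exact: ltr01.
have /forall_inPn [j1 j1S /forall_inPn [j2 j2S]] := no_leaf l lS.
rewrite /= !negb_imply => /and5P [n1 n2 c1 c2 j12].
have j1S' : j1 \in S :\ l by rewrite !inE n1 j1S.
have j2S' : j2 \in S :\ l :\ j1 by rewrite !inE eq_sym j12 n2 j2S.
rewrite (cmulD1 _ _ lS) (cmulD1 _ _ j1S') (cmulD1 _ _ j2S') cartanR_diag //.
have : cartanR l j1 <= -1 by rewrite cartanR_le_m1 // eq_sym.
have : cartanR l j2 <= -1 by rewrite cartanR_le_m1 // eq_sym.
have : cmul (S :\ l :\ j1 :\ j2) (fun=> 1) l <= 0.
  apply: sumr_le0 => j; rewrite !inE => /and4P [_ _ jl _].
  by rewrite mulr1 cartanR_le0 // eq_sym.
rewrite !mulr1; lra.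
Qed.

Lemma symmetrizer_on (S : {set 'I_n}) (u : 'I_n -> F) :
  {in S, forall j, 0 < u j} -> {in S, forall i, 0 < cmul S u i} ->
  exists2 d : 'I_n -> F, (forall j, 0 < d j) &
    {in S &, forall i j, d i * cartanR i j = d j * cartanR j i}.
Proof.
(* The symmetrizer on S minus a leaf l extends to l through the neighbour of l. *)
move: {2}#|S| (leqnn #|S|) => m; elim: m S => [|m IH] S S_le u_gt0 Cu_gt0;
  (have [->|S0] := eqVneq S set0;
   first by exists (fun=> 1) => [j|i j]; rewrite ?ltr01 ?inE).
  by move: S_le; rewrite leqn0 cards_eq0 (negbTE S0).
have [l lS leaf] := exists_leaf S0 u_gt0 Cu_gt0.
set S' := S :\ l.
have S'_le : (#|S'| <= m)%N by move: S_le; rewrite (cardsD1 l S) lS.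
have S'S : {subset S' <= S} by move=> j /setD1P [].
have Cu'_gt0 : {in S', forall i, 0 < cmul S' u i}.
  move=> i /setD1P [il iS]; have := Cu_gt0 i iS; rewrite (cmulD1 _ _ lS).
  have : cartanR i l * u l <= 0 by rewrite mulr_le0_ge0 ?cartanR_le0 ?ltW ?u_gt0.
  lra.
have [d' d'_gt0 d'_sym] := IH S' S'_le (fun j jS' => u_gt0 j (S'S j jS')) Cu'_gt0.
suff [dl dl_gt0 dl_sym] : exists2 dl, 0 < dl &
    {in S', forall j, dl * cartanR l j = d' j * cartanR j l}.
  exists (fun k => if k == l then dl else d' k) => [j|i j iS jS].
    by case: (j == l).
  have [->|il] := eqVneq i l; have [->|jl] := eqVneq j l => //.
  - by rewrite dl_sym // !inE jl.
  - by rewrite dl_sym // !inE il.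
  - by rewrite d'_sym // !inE ?il ?jl.
case: (boolP [exists j0 in S', C l j0 != 0]) => [|/exists_inPn no_nbr]; last first.
  exists 1 => [|j jS']; first exact: ltr01.
  have /negPn/eqP Clj := no_nbr j jS'.
  by rewrite /cartanR Clj (hC.2.2 _ _ Clj) mulr0z !mulr0.
case/exists_inP => j0 /setD1P [j0l j0S] c0.
have c0' : C j0 l != 0 by apply: contra c0 => /eqP/hC.2.2 ->.
have l_j0 : cartanR l j0 < 0 by rewrite lt_neqAle cartanR_eq0 c0 cartanR_le0 // eq_sym.
have j0_l : cartanR j0 l < 0 by rewrite lt_neqAle cartanR_eq0 c0' cartanR_le0.
exists (d' j0 * cartanR j0 l / cartanR l j0) => [|j /setD1P [jl jS]].
  by rewrite -mulrA mulr_gt0 ?d'_gt0 // nmulr_rgt0 // invr_lt0.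
have [->|jj0] := eqVneq j j0; first by rewrite divfK ?lt_eqF.
have Clj : C l j = 0.
  by apply/eqP; apply: contraNT jj0 => clj; apply/eqP/leaf.
by rewrite /cartanR Clj (hC.2.2 _ _ Clj) mulr0z !mulr0.
Qed.

End Symmetrization.

Section InvariantForm.
Variables (n : nat) (C : 'M[int]_n).
Hypothesis hC : is_GCM C.
Variable F : realFieldType.
Local Notation cartanR := (@cartanR n C F).
Variable d : 'I_n -> F.
Hypothesis d_gt0 : forall j, 0 < d j.
Hypothesis d_sym : forall i j, d i * cartanR i j = d j * cartanR j i.

Definition qform (x y : 'I_n -> F) := \sum_i \sum_j d i * cartanR i j * x i * y j.

Lemma eq_qform x x' y y' : x =1 x' -> y =1 y' -> qform x y = qform x' y'.
Proof.
by move=> xx' yy'; apply: eq_bigr => i _; apply: eq_bigr => j _; rewrite xx' yy'.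
Qed.

Lemma qformEl x y : qform x y = \sum_i x i * (d i * \sum_j cartanR i j * y j).
Proof. by apply: eq_bigr => i _; rewrite !mulr_sumr; apply: eq_bigr => j _; ring. Qed.

Lemma qformEr x y : qform x y = \sum_j y j * (d j * \sum_i cartanR j i * x i).
Proof.
rewrite /qform exchange_big /=; apply: eq_bigr => j _; rewrite !mulr_sumr.
by apply: eq_bigr => i _; rewrite d_sym; ring.
Qed.

Lemma qformBl x a y : qform (fun i => x i - a i) y = qform x y - qform a y.
Proof.
rewrite /qform -sumrB; apply: eq_bigr => i _; rewrite -sumrB.
by apply: eq_bigr => j _; ring.
Qed.

Lemma qformBr x y a : qform x (fun j => y j - a j) = qform x y - qform x a.
Proof.
rewrite /qform -sumrB; apply: eq_bigr => i _; rewrite -sumrB.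
by apply: eq_bigr => j _; ring.
Qed.

Lemma sum_delta (f : 'I_n -> F) k : \sum_i f i * (i == k)%:R = f k.
Proof.
by rewrite (bigD1 k) //= eqxx mulr1 big1 ?addr0 // => i /negbTE ->; rewrite mulr0.
Qed.

Lemma qform_deltal t k y :
  qform (fun i => t * (i == k)%:R) y = t * d k * \sum_j cartanR k j * y j.
Proof.
rewrite qformEl -mulrA -(sum_delta (fun i => t * (d i * \sum_j cartanR i j * y j))).
by apply: eq_bigr => i _; ring.
Qed.

Lemma qform_deltar t k x :
  qform x (fun j => t * (j == k)%:R) = t * d k * \sum_j cartanR k j * x j.
Proof.
rewrite qformEr -mulrA -(sum_delta (fun i => t * (d i * \sum_j cartanR i j * x j))).
by apply: eq_bigr => i _; ring.
Qed.

Lemma qform_reflect x k y : let t := \sum_j cartanR k j * x j in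
  (forall i, y i = x i - t * (i == k)%:R) -> qform y y = qform x x.
Proof.
move=> t yE; rewrite (eq_qform yE yE) qformBl !qformBr qform_deltar !qform_deltal -/t.
have -> : \sum_j cartanR k j * (t * (j == k)%:R) = cartanR k k * t.
  by rewrite -(sum_delta (fun j => cartanR k j * t)); apply: eq_bigr => j _; ring.
by rewrite cartanR_diag //; ring.
Qed.

Lemma qform_delta k : qform (fun i => (i == k)%:R) (fun i => (i == k)%:R) = 2 * d k.
Proof.
have e1 i : (i == k)%:R = 1 * (i == k)%:R :> F by rewrite mul1r.
rewrite (eq_qform e1 e1) qform_deltal.
have -> : \sum_j cartanR k j * (1 * (j == k)%:R) = cartanR k k.
  by rewrite -(sum_delta (cartanR k)); apply: eq_bigr => j _; rewrite mul1r.
by rewrite cartanR_diag //; ring.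
Qed.

Local Notation vecR := (@vecR n F).

Lemma qform_sigma_word w v :
  qform (vecR (sigma_word C w *m v)) (vecR (sigma_word C w *m v)) = qform (vecR v) (vecR v).
Proof.
elim: w v => [|i w IH] v /=; first by rewrite mul1mx.
by rewrite -mulmxA IH; apply: qform_reflect => k; apply: vecR_sigma.
Qed.

Lemma qform_word_root v : word_root C v -> qform (vecR v) (vecR v) <= \sum_j 2 * d j.
Proof.
case=> w [j ->]; rewrite qform_sigma_word.
have alphaR i : vecR (alpha j) i = (i == j)%:R by rewrite /vecR alphaE; case: (i == j).
rewrite (eq_qform alphaR alphaR) qform_delta (bigD1 j) //= lerDl.
by apply: sumr_ge0 => i _; rewrite mulr_ge0 ?ltW.
Qed.

Variable u : 'I_n -> F.
Hypothesis u_gt0 : forall i, 0 < u i.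
Hypothesis Cu_gt0 : forall i, 0 < \sum_j cartanR i j * u j.

Lemma qform_lower_bound x k :
  d k * (\sum_j cartanR k j * u j) * u k * (x k / u k) ^+ 2 <= qform x x.
Proof.
(* With x = u y, 2 qform x x = 2 T - D, and D <= 0 as the c_ij, i != j, are <= 0. *)
set y := fun i => x i / u i.
have xE i : x i = u i * y i by rewrite /y mulrC divfK ?gt_eqF.
set T := \sum_i d i * (\sum_j cartanR i j * u j) * u i * y i ^+ 2.
set D := \sum_i \sum_j d i * cartanR i j * u i * u j * (y i - y j) ^+ 2.
have DE : D = T + T - 2 * qform x x.
  have T_eq : T = \sum_i \sum_j d i * cartanR i j * u i * u j * y i ^+ 2.
    by apply: eq_bigr => i _; rewrite mulr_sumr !mulr_suml; apply: eq_bigr => j _; ring.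
  have T_eq' : T = \sum_i \sum_j d i * cartanR i j * u i * u j * y j ^+ 2.
    rewrite T_eq exchange_big; apply: eq_bigr => i _; apply: eq_bigr => j _.
    by rewrite d_sym; ring.
  rewrite {1}T_eq T_eq' /qform mulr_sumr -big_split -sumrB /=.
  apply: eq_bigr => i _; rewrite mulr_sumr -big_split -sumrB /=.
  by apply: eq_bigr => j _; rewrite (xE i) (xE j); ring.
have D_le0 : D <= 0.
  apply: sumr_le0 => i _; apply: sumr_le0 => j _.
  have [->|ij] := eqVneq i j; first by rewrite subrr expr0n /= mulr0.
  apply: mulr_le0_ge0 (sqr_ge0 _); apply: mulr_le0_ge0 (ltW (u_gt0 j)).
  apply: mulr_le0_ge0 (ltW (u_gt0 i)).
  exact: mulr_ge0_le0 (ltW (d_gt0 i)) (cartanR_le0 hC _ ij).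
have T_ge : d k * (\sum_j cartanR k j * u j) * u k * y k ^+ 2 <= T.
  rewrite /T [X in _ <= X](bigD1 k) //= lerDl; apply: sumr_ge0 => i _.
  by rewrite mulr_ge0 ?sqr_ge0 // !mulr_ge0 // ltW.
rewrite -/(y k); lra.
Qed.

End InvariantForm.

Local Notation RR := Rdefinitions.R.

Section FiniteType.
Variables (n : nat) (C : 'M[int]_n).
Hypothesis hC : is_GCM C.
Hypothesis hfin : finite_type C.
Local Notation cartanR := (@cartanR n C RR).
Local Notation cmul := (@cmul n C RR).
Local Notation vecR := (@vecR n RR).

Lemma finite_type_pairing_pos b : nonneg_vec b -> b != 0 ->
  exists i, 0 < pairing C i b.
Proof.
move=> b_ge0 b_neq0.
have [/existsP //|/existsPn pairing_le0] := boolP [exists i, 0 < pairing C i b]; exfalso.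
have [k bk] : exists k, b k 0 != 0.
  have [k bk|b0] := pickP (fun k => b k 0 != 0); first by exists k.
  move/eqP: b_neq0; case; apply/matrixP => x y.
  by rewrite (ord1 y) mxE; apply/eqP/negbFE/b0.
have hJ := comp_is_component hC k.
have [_ _ dichotomy] := hfin hJ.
have /dichotomy : {in comp C k, forall i, 0 <= cmul (comp C k) (fun j => - (b j 0)%:~R) i}.
  move=> i iJ; rewrite cmul_component // -[X in 0 <= X]opprK -sumrN.
  under eq_bigr do rewrite mulrN opprK.
  by rewrite -pairingR oppr_ge0 lerz0 leNgt pairing_le0.
case=> /(_ k (comp_self C k)); have := b_ge0 k; move: bk.
  by rewrite oppr_gt0 ltrz0; lia.
by move=> bk b_ge0k /eqP; rewrite oppr_eq0 intr_eq0 (negbTE bk).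
Qed.

Lemma finite_type_witness : exists2 u : 'I_n -> RR,
  forall j, 0 < u j & forall i, 0 < \sum_j cartanR i j * u j.
Proof.
(* fin_cond provides witnesses component by component; C is block diagonal. *)
have /fin_all_exists [uJ uJ_spec] : forall J : {set 'I_n}, exists u : 'I_n -> RR,
    is_component C J -> {in J, forall j, 0 < u j} /\ {in J, forall i, 0 < cmul J u i}.
  move=> J; have [hJ|nJ] := pselect (is_component C J); last by exists (fun=> 0).
  by have [_ [u [u_gt0 Cu_gt0]] _] := hfin hJ; exists u.
exists (fun k => uJ (comp C k) k) => [j|i].
  by have [+ _] := uJ_spec _ (comp_is_component hC j); apply; apply: comp_self.
have iJ := comp_self C i; have [_ Cu_gt0] := uJ_spec _ (comp_is_component hC i).
rewrite (eq_bigr (fun j => cartanR i j * uJ (comp C i) j)).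
  by rewrite -(cmul_component _ (comp_is_component hC i) iJ) Cu_gt0.
move=> j _; have [Cij0|Cij] := eqVneq (C i j) 0.
  by rewrite /cartanR Cij0 mulr0z !mul0r.
by rewrite (comp_eq hC (comp_adj iJ Cij)).
Qed.

Lemma finite_type_symmetrizer : exists2 d : 'I_n -> RR,
  forall j, 0 < d j & forall i j, d i * cartanR i j = d j * cartanR j i.
Proof.
have [u u_gt0 Cu_gt0] := finite_type_witness.
have [|d d_gt0 d_sym] := symmetrizer_on hC (S := setT) (fun j _ => u_gt0 j).
  by move=> i _; rewrite /cmul (eq_bigl xpredT) ?Cu_gt0 // => j; rewrite inE.
by exists d => // i j; apply: d_sym; rewrite inE.
Qed.

Lemma finite_type_roots_bounded :
  exists N : nat, forall v, word_root C v -> forall k, `|v k 0| < N%:Z.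
Proof.
have [d d_gt0 d_sym] := finite_type_symmetrizer.
have [u u_gt0 Cu_gt0] := finite_type_witness.
pose D := \sum_j 2 * d j.
pose c k := d k * (\sum_j cartanR k j * u j) / u k.
have c_gt0 k : 0 < c k by rewrite !mulr_gt0 ?invr_gt0.
pose K := \sum_k D / c k.
have D_ge0 : 0 <= D by apply: sumr_ge0 => j _; rewrite mulr_ge0 ?ltW.
have D_c_ge0 k : 0 <= D / c k by rewrite divr_ge0 // ltW.
have K_ge0 : 0 <= K by apply: sumr_ge0.
exists (Num.bound K) => v v_root k.
have v2_le : c k * vecR v k ^+ 2 <= D.
  apply: le_trans (qform_word_root hC d_gt0 d_sym v_root).
  apply: le_trans (qform_lower_bound hC d_gt0 d_sym u_gt0 Cu_gt0 _ k).
  by rewrite le_eqVlt; apply/orP; left; apply/eqP; rewrite /c; field; rewrite gt_eqF.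
have : vecR v k ^+ 2 < (Num.bound K)%:R.
  apply: le_lt_trans (archi_boundP K_ge0); apply: le_trans (_ : D / c k <= K).
    by rewrite ler_pdivlMr // mulrC.
  by rewrite /K (bigD1 k) //= lerDl; apply: sumr_ge0.
rewrite /vecR -rmorphXn -[_%:R]/((Num.bound K)%:Z%:~R : RR) ltr_int.
by move: (v k 0) => x; nia.
Qed.

Lemma finite_type_finite_word_roots : finite_set (word_root C).
Proof. by have [N N_bnd] := finite_type_roots_bounded; apply: finite_set_bounded N_bnd. Qed.

End FiniteType.

Lemma finite_type_of_witness n (C : 'M[int]_n) (u : 'I_n -> RR) : is_GCM C ->
  (forall j, 0 < u j) -> (forall i, 0 < \sum_j cartanR C RR i j * u j) -> finite_type C.
Proof.
move=> hC u_gt0 Cu_gt0 J hJ.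
have Cu_gt0J : {in J, forall i, 0 < cmul C J u i}.
  by move=> i iJ; rewrite cmul_component.
have dichotomy v := fin_cond_dichotomy hC hJ (fun j _ => u_gt0 j) Cu_gt0J (v := v).
by split; [exact: fin_cond_det | exists u | exact: dichotomy].
Qed.

Section FiniteRootSet.
Variables (n : nat) (C : 'M[int]_n).
Hypothesis hC : is_GCM C.
(* X stands for the real roots of a root system. *)
Variable X : 'cV[int]_n -> Prop.
Hypothesis X_alpha : forall i, X (alpha i).
Hypothesis X_sigma : forall i v, X v -> X (sigma C i *m v).
Hypothesis X_sign : forall v, X v -> nonneg_vec v \/ nonneg_vec (- v).
Hypothesis X_mult : forall v i (k : int), X v -> v = k *: alpha i ->
  v = alpha i \/ v = - alpha i.
Hypothesis X_fin : finite_set X.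

Lemma sigma_pos_root i v : X v -> nonneg_vec v -> v != alpha i ->
  nonneg_vec (sigma C i *m v).
Proof.
move=> Xv v_ge0 vi; apply: sigma_nonneg => //; first exact/X_sign/X_sigma.
by move=> k; apply: X_mult.
Qed.

Lemma finite_pos_roots : exists2 P : seq 'cV[int]_n, uniq P &
  forall v, v \in P <-> X v /\ nonneg_vec v.
Proof.
have [P P_uniq PE] : exists2 P, uniq P & forall v, v \in P <-> X v.
  have [s sE] := X_fin; exists (undup s) => [|v]; first exact: undup_uniq.
  by rewrite mem_undup; apply: iff_sym.
exists [seq v <- P | `[< nonneg_vec v >]]; first by rewrite filter_uniq.
move=> v; rewrite mem_filter.
by split=> [/andP [/asboolP v_ge0 /PE]|[/PE -> /asboolP ->]].
Qed.

Section PositiveRoots.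
Variable P : seq 'cV[int]_n.
Hypothesis P_uniq : uniq P.
Hypothesis PE : forall v, v \in P <-> X v /\ nonneg_vec v.

Lemma alpha_pos_root i : alpha i \in P.
Proof. by apply/PE; split; [apply: X_alpha | apply: nonneg_alpha]. Qed.

Lemma sigma_perm_pos_roots i :
  perm_eq [seq sigma C i *m v | v <- rem (alpha i) P] (rem (alpha i) P).
Proof.
have sigma_inj : injective (mulmx (sigma C i) : 'cV[int]_n -> 'cV[int]_n).
  exact: can_inj (sigma_mulmxK hC i).
have map_uniq : uniq [seq sigma C i *m v | v <- rem (alpha i) P].
  by rewrite map_inj_uniq ?rem_uniq.
apply: uniq_perm; rewrite ?rem_uniq //.
apply: (uniq_min_size map_uniq _ _).2; last by rewrite size_map.
move=> _ /mapP [v + ->]; rewrite !(mem_rem_uniq _ P_uniq) !inE => /andP [vi /PE [Xv v_ge0]].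
apply/andP; split; last by apply/PE; split; [apply: X_sigma | apply: sigma_pos_root].
apply: contra_neq vi => svi; case: (nonneg_opp_alpha (i := i)).
by rewrite -(sigma_alpha hC) -svi sigma_mulmxK.
Qed.

Lemma pairing_pos_root_sum i : pairing C i (\sum_(v <- P) v) = 2.
Proof.
rewrite (big_rem _ (alpha_pos_root i)) /=; set S := \sum_(v <- _) v.
(* s_i fixes S since it permutes the positive roots other than alpha_i. *)
have sigmaS : sigma C i *m S = S.
  rewrite mulmx_sumr -(big_map (mulmx (sigma C i)) xpredT id).
  exact: perm_big (sigma_perm_pos_roots i).
have := congr1 (fun v : 'cV[int]_n => v i 0) sigmaS.
rewrite sigmaE eqxx mulr1 pairingD pairing_alpha // => /eqP.
by rewrite subr_eq addrC -subr_eq subrr eq_sym => /eqP ->.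
Qed.

Lemma pos_root_sum_ge1 j : 1 <= (\sum_(v <- P) v) j 0.
Proof.
rewrite (big_rem _ (alpha_pos_root j)) /= mxE summxE alphaE eqxx lerDl big_seq.
by apply: sumr_ge0 => v /mem_rem /PE [_]; apply.
Qed.

End PositiveRoots.

Lemma finite_type_of_finite_root_set : finite_type C.
Proof.
have [P P_uniq PE] := finite_pos_roots.
apply: (finite_type_of_witness (u := vecR RR (\sum_(v <- P) v))) => // [j|i].
  by rewrite /vecR ltr0z (lt_le_trans ltr01 (pos_root_sum_ge1 PE j)).
by rewrite -pairingR pairing_pos_root_sum // ltr0z.
Qed.

End FiniteRootSet.

Section RootSystem.
Variables (n : nat) (C : 'M[int]_n).
Hypothesis hC : is_GCM C.
Variables (A : Type) (rho : 'I_n -> A -> A) (Cs : A -> 'M[int]_n).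
Hypothesis hsch : is_cartan_scheme rho Cs.
Hypothesis hCa : forall a, Cs a = C.
Variable R : A -> 'cV[int]_n -> Prop.
Hypothesis hR : is_root_system rho Cs R.

Lemma wmap_sigma_word a w : wmap rho Cs a w = sigma_word C w.
Proof. by elim: w a => [|i w IH] a //=; rewrite IH hCa. Qed.

Lemma wend_rev a w : wend rho (wend rho a (rev w)) w = a.
Proof.
elim: w a => [|i w IH] a //.
by rewrite rev_cons /wend -cats1 foldl_cat /= hsch.2.1; apply: IH.
Qed.

Lemma hom_sigma_word a f :
  (exists b, is_hom rho Cs a b f) <-> exists w, f = sigma_word C w.
Proof.
split=> [[b [w [_ ->]]]|[w ->]]; first by exists w; rewrite wmap_sigma_word.
by exists (wend rho a w), w; rewrite wmap_sigma_word.
Qed.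

Lemma hom_weyl_group a :
  is_aut_subgroup (fun f => exists b, is_hom rho Cs a b f) /\
  group_iso (fun f => exists b, is_hom rho Cs a b f) (in_weyl C).
Proof.
split; first split.
- by move=> f /hom_sigma_word [w ->]; apply: sigma_word_unit.
- by apply/hom_sigma_word; exists [::].
- move=> f g /hom_sigma_word [w1 ->] /hom_sigma_word [w2 ->].
  by apply/hom_sigma_word; exists (w2 ++ w1); rewrite sigma_word_cat.
- move=> f /hom_sigma_word [w ->]; apply/hom_sigma_word.
  by exists (rev w); rewrite invmx_sigma_word.
exists id; split=> [//|f /hom_sigma_word [w ->]|//|g /(in_weylP hC) [w ->]].
  by apply/(in_weylP hC); exists w.
by exists (sigma_word C w); split=> //; apply/hom_sigma_word; exists w.
Qed.

Lemma R_sigma a i v : R a v -> R (rho i a) (sigma C i *m v).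
Proof. by case: hR => _ _ R3 _ Rv; apply/R3; exists v; rewrite hCa. Qed.

Lemma R_sigma_word a w v : R a v -> R (wend rho a w) (sigma_word C w *m v).
Proof.
elim: w a v => [|i w IH] a v Rv /=; first by rewrite mul1mx.
by rewrite -mulmxA; apply/IH/R_sigma.
Qed.

Lemma R_alpha a i : R a (alpha i).
Proof. by case: hR => _ R2 _ _; case: (proj2 (R2 a i (alpha i)) (or_introl erefl)). Qed.

Lemma word_root_R a v : word_root C v -> R a v.
Proof.
case=> w [j ->]; rewrite -[a](wend_rev a w).
exact/R_sigma_word/R_alpha.
Qed.

Lemma R_sign a v : R a v -> nonneg_vec v \/ nonneg_vec (- v).
Proof.
by case: hR => R1 _ _ _ /R1 [[_ v_ge0]|[u [_ [u_ge0 ->]]]]; [left|right; rewrite opprK].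
Qed.

Lemma R_mult a i v (k : int) : R a v -> v = k *: alpha i -> v = alpha i \/ v = - alpha i.
Proof. by case: hR => _ R2 _ _ Rv vE; apply/(R2 a i v); split=> //; exists k. Qed.

Lemma R_neq0 a v : (0 < n)%N -> R a v -> v != 0.
Proof.
move=> n_gt0 Rv; apply/eqP => v0; pose i := Ordinal n_gt0.
have [] := R_mult (i := i) (k := 0) Rv; rewrite v0 ?scale0r // => /matrixP/(_ i 0).
  by rewrite mxE alphaE eqxx.
by rewrite !mxE eqxx.
Qed.

Section FiniteTypeRoots.
Hypothesis n_gt0 : (0 < n)%N.
Hypothesis hfin : finite_type C.

Lemma R_descent a b : R a b -> nonneg_vec b -> (forall i, b != alpha i) ->
  exists i, [/\ R (rho i a) (sigma C i *m b), nonneg_vec (sigma C i *m b)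
               & ht (sigma C i *m b) < ht b].
Proof.
move=> Rb b_ge0 b_nsimple.
have [i pairing_gt0] := finite_type_pairing_pos hC hfin b_ge0 (R_neq0 n_gt0 Rb).
exists i; split; first exact: R_sigma.
  apply: (sigma_nonneg b_ge0 (b_nsimple i)); first exact: R_sign (R_sigma i Rb).
  by move=> k; apply: R_mult Rb.
by rewrite ht_sigma; move: pairing_gt0; lia.
Qed.

Lemma R_pos_word_root a b : R a b -> nonneg_vec b -> word_root C b.
Proof.
have [N] : exists N : nat, ht b < N%:Z by exists `|ht b|.+1; lia.
elim: N a b => [|N IH] a b htN Rb b_ge0; first by have := ht_ge0 b_ge0; lia.
have [i /eqP ->|b_nsimple] := pickP (fun i => b == alpha i).
  exact: word_root_alpha.
have [i [Rsb sb_ge0 ht_lt]] := R_descent Rb b_ge0 (fun i => negbT (b_nsimple i)).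
rewrite -(sigma_mulmxK hC i b); apply/word_root_sigma/(IH _ _ _ Rsb sb_ge0).
by move: ht_lt htN; lia.
Qed.

Lemma R_word_root a v : R a v -> word_root C v.
Proof.
case: hR => R1 _ _ _ /R1 [[Rv v_ge0]|[u [Ru [u_ge0 ->]]]].
  exact: R_pos_word_root Rv v_ge0.
exact/word_root_opp/(R_pos_word_root Ru u_ge0).
Qed.

End FiniteTypeRoots.

End RootSystem.

Theorem theorem3p3 (n : nat) (hn : (0 < n)%N) (C : 'M[int]_n) (hC : is_GCM C)
  (A : Type) (hA : inhabited A) (rho : 'I_n -> A -> A) (Cs : A -> 'M[int]_n)
  (hsch : is_cartan_scheme rho Cs) (hconn : connected rho)
  (hstd : standard Cs) (hCa : forall a, Cs a = C)
  (R : A -> 'cV[int]_n -> Prop) (hR : is_root_system rho Cs R) :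
  [/\ (forall a : A,
         is_aut_subgroup (fun f => exists b, is_hom rho Cs a b f) /\
         group_iso (fun f => exists b, is_hom rho Cs a b f) (in_weyl C)),
      ((forall a, finite_set (R a)) <-> finite_type C) &
      ((forall a, finite_set (R a)) ->
         (forall a v, R a v <-> is_weyl_root C v) /\
         (forall a b v, R a v <-> R b v))].
Proof.
have [a0] := hA.
have R_fin_type : (forall a, finite_set (R a)) -> finite_type C.
  move=> R_fin; have root_R := word_root_R hsch hCa hR a0.
  apply: (finite_type_of_finite_root_set hC (word_root_alpha C)
                                          (word_root_sigma (C := C))).
  - by move=> v /root_R /(R_sign hR).
  - by move=> v i k /root_R Rv vE; exact: (R_mult hR Rv vE).
  - exact: finite_set_sub (R_fin a0) root_R.
have RE (hfin : finite_type C) a v : R a v <-> word_root C v.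
  by split; [apply: (R_word_root hC hCa hR hn hfin) | apply: (word_root_R hsch hCa hR a)].
split; first exact: hom_weyl_group.
  split=> [/R_fin_type // | hfin a].
  apply: finite_set_sub (finite_type_finite_word_roots hC hfin) _ => v.
  by rewrite (RE hfin).
move/R_fin_type => hfin; split=> [a v | a b v]; first by rewrite (RE hfin) (is_weyl_rootP hC).
by rewrite !(RE hfin).
Qed.
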